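(* Let $s\geq1$ and consider an explicit $s$-stage Runge–Kutta method in Shu–Osher form with coefficients $a_{i,k}\geq0$, $b_{i,k}\geq0$ ($1\leq i\leq s$, $0\leq k\leq i-1$), $\sum_{k=0}^{i-1}a_{i,k}=1$ for each $i$. Let $\alpha>0$ and $T^{(1)}_\lambda(\beta,\Delta t)=(1-\beta\Delta t\lambda)^{-1}$. Apply the method to $dy/dt=T^{(1)}_\lambda(\alpha,\Delta t)\lambda y$: $y^{(0)}=y^n$, $y^{(i)}=\sum_{k=0}^{i-1}\left(a_{i,k}y^{(k)}+\Delta t\,b_{i,k}T^{(1)}_\lambda(\alpha,\Delta t)\lambda y^{(k)}\right)$, $y^{n+1}=y^{(s)}$. Suppose that for every pair $(i,k)$ with $b_{i,k}>0$, setting $\alpha_{i,k}=(a_{i,k}/b_{i,k})\alpha$, the explicit Euler integration of $dy/dt=T^{(1)}_\lambda(\alpha_{i,k},\Delta t)\lambda y$ is unconditionally stable, i.e. $|1+\Delta t\,T^{(1)}_\lambda(\alpha_{i,k},\Delta t)\lambda|\leq1$ for all $\Delta t>0$ and all $\lambda\in\mathbb{C}$ with $\mathrm{Re}(\lambda)\leq0$. Then the Runge–Kutta integration above is unconditionally stable: $|y^{n+1}|\leq|y^n|$ for all $\Delta t>0$, all $\lambda$ with $\mathrm{Re}(\lambda)\leq 0$ and all $y^n\in\mathbb{C}$. *)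

(* complex numbers are R[i] = complex R over a real closed field R
   (mathcomp-real-closed); for R = the reals this is the usual field C. *)
From HB Require Import structures.
From mathcomp Require Import all_boot all_order all_algebra.
From mathcomp Require Import complex.
Set Implicit Arguments. Unset Strict Implicit. Unset Printing Implicit Defensive.
Import Order.TTheory GRing.Theory Num.Theory.
Local Open Scope ring_scope.
Local Open Scope complex_scope.

Definition T1 (R : rcfType) (lam : R[i]) (beta dt : R) : R[i] :=
  (1 - (beta * dt)%:C * lam)^-1.

Fixpoint rk_stages (R : rcfType) (a b : nat -> nat -> R) (alpha dt : R)
    (lam y0 : R[i]) (n : nat) : seq R[i] :=
  match n with
  | 0 => [:: y0]
  | m.+1 =>
      let ys := rk_stages a b alpha dt lam y0 m in
      rcons ys (\sum_(k < m.+1)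
                  ((a m.+1 k)%:C * ys`_k
                   + (dt * b m.+1 k)%:C * T1 lam alpha dt * lam * ys`_k))
  end.

Definition rk_step (R : rcfType) (s : nat) (a b : nat -> nat -> R) (alpha dt : R)
    (lam y0 : R[i]) : R[i] :=
  (rk_stages a b alpha dt lam y0 s)`_s.

(** Each Shu-Osher stage is a sum of terms [(a + dt b T(alpha, dt) lam) y^(k)].
    Since [T] depends on [beta] and [dt] only through [beta * dt], such a term
    equals [a (1 + dt' T(alpha', dt') lam) y^(k)] with [alpha' = a/b alpha] and
    [dt' = b/a dt]: an explicit Euler step of the modified equation, of norm at
    most [a |y^(k)|] by hypothesis.  Summing over [k] with [sum_k a_{i,k} = 1]
    bounds every stage by [|y^n|], by strong induction on the stage index.
    Stability for [alpha' = 0] fails, so [b > 0] forces [a > 0] and the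
    rescaling is legitimate. *)
From HB Require Import structures.
From mathcomp Require Import all_boot all_order all_algebra.
From mathcomp Require Import complex.
From mathcomp Require Import ring.
Set Implicit Arguments. Unset Strict Implicit. Unset Printing Implicit Defensive.
Import Order.TTheory GRing.Theory Num.Theory.
Local Open Scope ring_scope.
Local Open Scope complex_scope.

Section Stages.
Variables (R : rcfType) (a b : nat -> nat -> R) (alpha dt : R) (lam y0 : R[i]).
Local Notation stages := (rk_stages a b alpha dt lam y0).

Definition rk_stage n := (stages n)`_n.

Lemma size_rk_stages n : size (stages n) = n.+1.
Proof. by elim: n => //= n IH; rewrite size_rcons IH. Qed.

Lemma nth_rk_stages n k : (k <= n)%N -> (stages n)`_k = rk_stage k.
Proof.
elim: n => [|n IH]; first by rewrite leqn0 => /eqP->.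
rewrite leq_eqVlt => /orP[/eqP-> //|ltkn].
by rewrite /= nth_rcons size_rk_stages ltkn IH.
Qed.

Lemma rk_stageS m : rk_stage m.+1 = \sum_(k < m.+1)
  ((a m.+1 k)%:C * rk_stage k + (dt * b m.+1 k)%:C * T1 lam alpha dt * lam * rk_stage k).
Proof.
rewrite /rk_stage /= nth_rcons size_rk_stages ltnn eqxx; apply: eq_bigr => k _.
by rewrite nth_rk_stages // -ltnS.
Qed.

End Stages.

Definition euler_stable (R : rcfType) (beta : R) :=
  forall (dt : R) (lam : R[i]), 0 < dt -> Re lam <= 0 ->
    `|1 + dt%:C * T1 lam beta dt * lam| <= 1.

Lemma not_euler_stable0 (R : rcfType) : ~ euler_stable (0 : R).
Proof.
move=> /(_ 1 (-3) ltr01); rewrite /T1 !mul0r subr0 invr1 !mul1r.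
have -> : 'Re (-3 : R[i]) = -3 by rewrite (Creal_ReP _ _) ?rpredN ?realn.
rewrite oppr_le0 ler0n => /(_ isT).
have -> : (1 - 3 : R[i]) = - 2%:R by ring.
by rewrite normrN normr_nat lern1.
Qed.

Section ShuOsherTerm.
Variables (R : rcfType) (alpha dt A B : R) (lam : R[i]).
Hypotheses (dt_gt0 : 0 < dt) (Re_lam_le0 : Re lam <= 0).
Hypotheses (A_ge0 : 0 <= A) (B_ge0 : 0 <= B).
Hypothesis stable_AB : 0 < B -> euler_stable (A / B * alpha).

Lemma shu_osher_term_as_euler : 0 < A -> 0 < B ->
  A%:C + (dt * B)%:C * T1 lam alpha dt * lam =
  A%:C * (1 + (B / A * dt)%:C * T1 lam (A / B * alpha) (B / A * dt) * lam).
Proof.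
move=> A_gt0 B_gt0; have A_neq0 := lt0r_neq0 A_gt0; have B_neq0 := lt0r_neq0 B_gt0.
have -> : T1 lam (A / B * alpha) (B / A * dt) = T1 lam alpha dt.
  by rewrite /T1 (_ : A / B * alpha * (B / A * dt) = alpha * dt) //; field; rewrite A_neq0.
rewrite mulrDr mulr1 !mulrA -rmorphM /=.
by congr (_ + _%:C * _ * _); field; rewrite A_neq0.
Qed.

Lemma norm_shu_osher_coef :
  `|A%:C + (dt * B)%:C * T1 lam alpha dt * lam| <= A%:C.
Proof.
have [B0 | B_neq0] := eqVneq B 0.
  by rewrite B0 mulr0 mul0r mul0r addr0 ger0_norm ?ler0c.
have B_gt0 : 0 < B by rewrite lt_def B_neq0.
have A_gt0 : 0 < A.
  rewrite lt_def A_ge0 andbT; apply/eqP => A0.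
  by have := stable_AB B_gt0; rewrite A0 !mul0r; apply: not_euler_stable0.
rewrite shu_osher_term_as_euler // normrM ger0_norm ?ler0c //.
rewrite -[leRHS]mulr1 ler_wpM2l ?ler0c // stable_AB //.
by rewrite mulr_gt0 ?divr_gt0.
Qed.

End ShuOsherTerm.

Section Stability.
Variables (R : rcfType) (s : nat) (a b : nat -> nat -> R) (alpha dt : R) (lam : R[i]).
Hypotheses (dt_gt0 : 0 < dt) (Re_lam_le0 : Re lam <= 0).
Hypothesis a_ge0 : forall i k, (1 <= i <= s)%N -> (k < i)%N -> 0 <= a i k.
Hypothesis b_ge0 : forall i k, (1 <= i <= s)%N -> (k < i)%N -> 0 <= b i k.
Hypothesis sum_a : forall i, (1 <= i <= s)%N -> \sum_(k < i) a i k = 1.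
Hypothesis stable_ab : forall i k, (1 <= i <= s)%N -> (k < i)%N -> 0 < b i k ->
  euler_stable (a i k / b i k * alpha).

Lemma norm_rk_stage_le y0 i : (i <= s)%N -> `|rk_stage a b alpha dt lam y0 i| <= `|y0|.
Proof.
elim/ltn_ind: i => -[_ _ | m IH le_m1_s]; first exact: lexx.
have im : (1 <= m.+1 <= s)%N by rewrite le_m1_s.
have -> : `|y0| = \sum_(k < m.+1) (a m.+1 k)%:C * `|y0|.
  by rewrite -mulr_suml -rmorph_sum sum_a // rmorph1 mul1r.
rewrite rk_stageS; apply: le_trans (ler_norm_sum _ _ _) _.
apply: ler_sum => k _; rewrite -mulrDl normrM.
apply: ler_pM => //.
  by apply: norm_shu_osher_coef => //; [apply: a_ge0 | apply: b_ge0 | apply: stable_ab].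
by apply: IH => //; apply: leq_trans (ltnW (ltn_ord k)) le_m1_s.
Qed.

End Stability.

Theorem lemma2 (R : rcfType) (s : nat) (a b : nat -> nat -> R) (alpha : R) :
  (1 <= s)%N ->
  (forall i k, (1 <= i <= s)%N -> (k < i)%N -> 0 <= a i k) ->
  (forall i k, (1 <= i <= s)%N -> (k < i)%N -> 0 <= b i k) ->
  (forall i, (1 <= i <= s)%N -> \sum_(k < i) a i k = 1) ->
  0 < alpha ->
  (forall i k, (1 <= i <= s)%N -> (k < i)%N -> 0 < b i k ->
     forall (dt : R) (lam : R[i]), 0 < dt -> Re lam <= 0 ->
       `|1 + dt%:C * T1 lam (a i k / b i k * alpha) dt * lam| <= 1) ->
  forall (dt : R) (lam y0 : R[i]), 0 < dt -> Re lam <= 0 ->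
    `|rk_step s a b alpha dt lam y0| <= `|y0|.
Proof.
move=> _ a_ge0 b_ge0 sum_a _ stable_ab dt lam y0 dt_gt0 Re_lam_le0.
exact: (norm_rk_stage_le dt_gt0 Re_lam_le0 a_ge0 b_ge0 sum_a stable_ab y0 (leqnn s)).
Qed.
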